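(* For any linearizable sketch and any $\lambda>0$, \[ H(\mathbf Y_{[\lambda]})=\sum_{i}\dot H(p_i\lambda)\,\Pr\big(\phi(Y_{0,\lambda},\dots,Y_{i-1,\lambda})=0\big),\qquad \lambda^2 I_{\mathbf Y}(\lambda)=\sum_{i}\dot I(p_i\lambda)\,\Pr\big(\phi(Y_{0,\lambda},\dots,Y_{i-1,\lambda})=0\big), \] the sums ranging over all cell indices $i$.
   Context: Dartboard model: the unit square is partitioned into a finite or countable sequence of cells $c_0,c_1,\dots$ with sizes (areas) $p_i>0$, $\sum_ip_i=1$. Darts arrive according to a Poisson process of rate 1 in time, each landing uniformly; thus at time (cardinality) $\lambda$ the numbers of darts in the cells are independent $\mathrm{Poisson}(p_i\lambda)$ variables. Let $Z_{i,\lambda}$ be the indicator that $c_i$ has been hit by time $\lambda$. A linearizable sketch is given by a function $\phi:\{0,1\}^*\to\{0,1\}$ on finite binary strings that is monotone (coordinatewise $y\le y'$ of equal length implies $\phi(y)\le\phi(y')$), and the cell-occupancy indicators are defined recursively by $Y_{i,\lambda}=Z_{i,\lambda}\vee\phi(Y_{0,\lambda},\dots,Y_{i-1,\lambda})$ (with $\phi$ of the empty string for $i=0$). The state at time $\lambda$ is $\mathbf Y_{[\lambda]}=(Y_{0,\lambda},Y_{1,\lambda},\dots)$; $H(\mathbf Y_{[\lambda]})$ is its Shannon entropy in bits and $I_{\mathbf Y}(\lambda)$ the Fisher information of $\lambda$ with respect to it (standard regularity assumed). $\dot H(t)=\frac{1}{\ln2}\big(te^{-t}-(1-e^{-t})\ln(1-e^{-t})\big)$,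 $\dot I(t)=\frac{t^2}{e^t-1}$. *)

From mathcomp Require Import all_boot all_order all_algebra.
From mathcomp Require Import all_classical all_reals all_analysis.
Set Implicit Arguments. Unset Strict Implicit. Unset Printing Implicit Defensive.
Import Order.TTheory GRing.Theory Num.Theory.
Local Open Scope ring_scope.

Section Dartboard.
Variable R : realType.

Definition log2 (x : R) : R := ln x / ln 2.

Definition Hdot (t : R) : R :=
  (t * expR (- t) - (1 - expR (- t)) * ln (1 - expR (- t))) / ln 2.
Definition Idot (t : R) : R := t ^+ 2 / (expR t - 1).

Definition monotone_sketch (phi : seq bool -> bool) : Prop :=
  forall y y' : seq bool, size y = size y' ->
    (forall i, (i < size y)%N -> (nth false y i <= nth false y' i)%O) ->
    (phi y <= phi y')%O.

(* Cell occupancy from hit indicators z = (Z_0,...,Z_{n-1}):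
   Y_i = Z_i || phi (Y_0,...,Y_{i-1}). *)
Definition Ystate (phi : seq bool -> bool) (z : seq bool) : seq bool :=
  foldl (fun ys zi => rcons ys (zi || phi ys)) [::] z.

(* Law of Z_i: hit by time lam with probability 1 - exp(-p_i lam)
   (Poisson(p_i lam) number of darts, independent across cells). *)
Definition bern (mu : R) (b : bool) : R :=
  if b then 1 - expR (- mu) else expR (- mu).

Definition Pz (n : nat) (p : nat -> R) (lam : R) (z : n.-tuple bool) : R :=
  \prod_(i < n) bern (p i * lam) (tnth z i).

Definition PY (n : nat) (p : nat -> R) (phi : seq bool -> bool) (lam : R)
    (y : n.-tuple bool) : R :=
  \sum_(z : n.-tuple bool | Ystate phi z == tval y) Pz p lam z.

Definition HY (n : nat) (p : nat -> R) (phi : seq bool -> bool) (lam : R) : R :=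
  - \sum_(y : n.-tuple bool | PY p phi lam y != 0)
      PY p phi lam y * log2 (PY p phi lam y).

Definition IY (n : nat) (p : nat -> R) (phi : seq bool -> bool) (lam : R) : R :=
  \sum_(y : n.-tuple bool | PY p phi lam y != 0)
      (derive1 (fun l => PY p phi l y) lam) ^+ 2 / PY p phi lam y.

Definition PrNotPhi (n : nat) (p : nat -> R) (phi : seq bool -> bool) (lam : R)
    (i : nat) : R :=
  \sum_(z : n.-tuple bool) Pz p lam z * (~~ phi (take i (Ystate phi z)))%:R.

(* Countable case: entropy / Fisher information of the whole sequence,
   as the limits (= suprema, they are nondecreasing) over finite prefixes *)
Definition HYinf (p : nat -> R) (phi : seq bool -> bool) (lam : R) : \bar R :=
  ereal_sup (range (fun m : nat => (@HY m p phi lam)%:E)).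
Definition IYinf (p : nat -> R) (phi : seq bool -> bool) (lam : R) : \bar R :=
  ereal_sup (range (fun m : nat => (@IY m p phi lam)%:E)).

End Dartboard.

From mathcomp Require Import all_boot all_order all_algebra.
From mathcomp Require Import all_classical all_reals all_analysis.
From mathcomp Require Import ring.
Set Implicit Arguments. Unset Strict Implicit. Unset Printing Implicit Defensive.
Import Order.TTheory GRing.Theory Num.Theory numFieldNormedType.Exports.
Local Open Scope classical_set_scope.
Local Open Scope ring_scope.

(* Given the prefix y = (Y_0, ..., Y_{n-1}) of the state, the next bit Y_n is
   1 for sure when phi y holds, and otherwise equals the hit indicator Z_n, a
   Bernoulli variable of parameter 1 - exp(-p_n lam) independent of the prefix.
   Hence the law of the state factorizes as
     PY (rcons y c) = PY y * cell_law (phi y) (p_n lam) c          (PY_rcons).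
   Entropy and Fisher information obey a chain rule along this factorization:
   appending cell n adds Hdot (p_n lam), resp. Idot (p_n lam) / lam^2, times
   Pr(phi(Y_0..Y_{n-1}) = 0)  (HY_rcons, IY_rcons); the one-cell computations
   are entropy_cell and fisher_cell.  Since Pr(phi(Y_0..Y_{i-1}) = 0) does not
   depend on how many further cells are modelled (PrNotPhi_stable), the finite
   formulas are the partial sums of a series of nonnegative terms, and the
   countable case follows by taking suprema (ereal_sup_partial_sums). *)

Section TupleSplit.
Variable T : finType.

Definition front n (t : n.+1.-tuple T) : n.-tuple T :=
  belast_tuple (thead t) (behead_tuple t).
Definition lastt n (t : n.+1.-tuple T) : T := last (thead t) (behead t).

Lemma front_lastK n (t : n.+1.-tuple T) : rcons_tuple (front t) (lastt t) = t.
Proof.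
apply: val_inj => /=; rewrite /lastt -lastI.
by case: t => [[|x s] //= _].
Qed.

Lemma rcons_tupleK n (u : n.-tuple T) b :
  front (rcons_tuple u b) = u /\ lastt (rcons_tuple u b) = b.
Proof.
have eq_rcons :
    rcons (front (rcons_tuple u b)) (lastt (rcons_tuple u b)) = rcons u b.
  by rewrite /= /lastt -lastI; case: u => [[|x s] u_size].
by move/rcons_inj: eq_rcons => [eq_front eq_last]; split => //; apply: val_inj.
Qed.

Lemma sum_tuple_rcons (V : nmodType) n (F : n.+1.-tuple T -> V) :
  \sum_(t : n.+1.-tuple T) F t =
  \sum_(u : n.-tuple T) \sum_(b : T) F (rcons_tuple u b).
Proof.
rewrite pair_bigA /=.
rewrite (reindex (fun ub : n.-tuple T * T => rcons_tuple ub.1 ub.2)) //=.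
exists (fun t => (front t, lastt t)) => [[u b] _|t _] /=; last exact: front_lastK.
by case: (rcons_tupleK u b) => -> ->.
Qed.

Lemma sum_tuple0 (V : nmodType) (F : 0.-tuple T -> V) :
  \sum_(t : 0.-tuple T) F t = F [tuple].
Proof.
by rewrite (big_pred1 [tuple]) // => t /=; rewrite (tuple0 t); apply/esym/eqxx.
Qed.

End TupleSplit.

Section SingleCell.
Variable R : realType.

(* Conditional law of the next bit Y = Z || b, where Z ~ bern mu. *)
Definition cell_law (b : bool) (mu : R) (c : bool) : R :=
  if b then c%:R else bern mu c.

Definition cell_law_deriv (b : bool) (a x : R) (c : bool) : R :=
  if b then 0 else
  if c then a * expR (- (a * x)) else - (a * expR (- (a * x))).

Lemma bern_ge0 (mu : R) b : 0 <= mu -> 0 <= bern mu b.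
Proof.
by move=> mu_ge0; case: b; rewrite /bern ?expR_ge0 // subr_ge0 expR_le1 oppr_le0.
Qed.

Lemma cell_law_ge0 b (mu : R) c : 0 <= mu -> 0 <= cell_law b mu c.
Proof. by move=> mu_ge0; rewrite /cell_law; case: b; [exact: ler0n|exact: bern_ge0]. Qed.

Lemma is_derive_expR_lin (a x : R) :
  is_derive x 1 (fun l => expR (- (a * l))) (- (a * expR (- (a * x)))).
Proof.
have lin : is_derive x 1 (fun l : R => - (a * l)) (- a).
  have -> : (fun l : R => - (a * l)) = (- a) \*: (@id R).
    by apply/funext => l /=; rewrite scaleNr.
  by apply: is_derive_eq; rewrite /GRing.scale /= mulr1.
apply: (is_derive_eq (is_derive1_comp (f := expR) (is_derive_expR _) lin)).
by rewrite mulrN mulrC.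
Qed.

Lemma is_derive_cell_law b (a x : R) c :
  is_derive x 1 (fun l => cell_law b (a * l) c) (cell_law_deriv b a x c).
Proof.
rewrite /cell_law /cell_law_deriv; case: b; first exact: is_derive_cst.
case: c; rewrite /bern; last exact: is_derive_expR_lin.
apply: (is_derive_eq (is_deriveB (is_derive_cst (1 : R) x 1) (is_derive_expR_lin a x))).
by rewrite sub0r opprK.
Qed.

Lemma xlog2M (u v : R) : 0 <= u -> 0 <= v ->
  u * v * log2 (u * v) = u * v * (log2 u + log2 v).
Proof.
move=> u_ge0 v_ge0; have [->|u0] := eqVneq u 0; first by rewrite !mul0r.
have [->|v0] := eqVneq v 0; first by rewrite !mulr0 !mul0r.
by rewrite /log2 lnM ?mulrDl // posrE lt0r ?u0 ?v0.
Qed.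

Lemma entropy_cell (P mu : R) b : 0 <= P -> 0 <= mu ->
  \sum_(c : bool) P * cell_law b mu c * log2 (P * cell_law b mu c)
  = P * log2 P - Hdot mu * (P * (~~ b)%:R).
Proof.
move=> P_ge0 mu_ge0; rewrite big_bool !xlog2M ?cell_law_ge0 //.
rewrite /cell_law; case: b => /=; rewrite ?mulr1n ?mulr0n /log2 ?ln1; first ring.
by rewrite /bern /Hdot expRK; ring.
Qed.

(* Fisher-information chain rule for one cell, for a prefix of probability P
   and derivative D; the new bit contributes Idot (a x) / x^2 on ~~ b. *)
Lemma fisher_cell (P D a x : R) b : 0 < a * x ->
  x ^+ 2 * \sum_(c : bool)
      (D * cell_law b (a * x) c + P * cell_law_deriv b a x c) ^+ 2
      / (P * cell_law b (a * x) c)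
  = x ^+ 2 * (D ^+ 2 / P) + Idot (a * x) * (P * (~~ b)%:R).
Proof.
move=> ax_gt0; rewrite big_bool /cell_law /cell_law_deriv.
case: b => /=; rewrite ?mulr1n ?mulr0n.
  by rewrite !mulr0 !mulr1 !addr0 invr0 !mulr0 addr0.
have [->|P0] := eqVneq P 0; first by rewrite !(mul0r, invr0, mulr0, addr0).
rewrite /bern /Idot expRN.
have E_gt1 : 1 < expR (a * x) by rewrite expR_gt1.
set E := expR (a * x).
have E0 : E != 0 by rewrite gt_eqF // (lt_trans ltr01).
have E10 : E - 1 != 0 by rewrite subr_eq0 gt_eqF.
have E20 : 1 - E^-1 != 0 by rewrite subr_eq0 eq_sym invr_eq1 ?unitfE // gt_eqF.
by field; rewrite E10 P0 E0.
Qed.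

End SingleCell.

Section Occupancy.
Variables (R : realType) (p : nat -> R) (phi : seq bool -> bool).

Lemma Ystate_rcons z b :
  Ystate phi (rcons z b) = rcons (Ystate phi z) (b || phi (Ystate phi z)).
Proof. by rewrite /Ystate foldl_rcons. Qed.

Lemma size_Ystate z : size (Ystate phi z) = size z.
Proof. by elim/last_ind: z => [//|z b IH]; rewrite Ystate_rcons !size_rcons IH. Qed.

Lemma Pz_rcons n l (u : n.-tuple bool) b :
  Pz p l (rcons_tuple u b) = Pz p l u * bern (p n * l) b.
Proof.
rewrite /Pz big_ord_recr /= (tnth_nth false) /= nth_rcons size_tuple ltnn eqxx.
congr (_ * _); apply: eq_bigr => i _.
by rewrite !(tnth_nth false) /= nth_rcons size_tuple ltn_ord.
Qed.

Lemma PY_rcons n l (y : n.-tuple bool) c :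
  PY p phi l (rcons_tuple y c) = PY p phi l y * cell_law (phi y) (p n * l) c.
Proof.
rewrite /PY big_mkcond sum_tuple_rcons big_distrl /= [RHS]big_mkcond /=.
apply: eq_bigr => u _.
under eq_bigr => b _ do rewrite Ystate_rcons eqseq_rcons Pz_rcons.
case: eqP => [->|_]; last by rewrite big1.
by rewrite big_bool /= /cell_law; case: (phi y); case: c; rewrite /bern /=; ring.
Qed.

Lemma PY0 l (y : 0.-tuple bool) : PY p phi l y = 1.
Proof. by rewrite /PY big_mkcond sum_tuple0 /= (tuple0 y) /= /Pz big_ord0. Qed.

Lemma PY_ge0 n l (y : n.-tuple bool) :
  (forall i, (i < n)%N -> 0 <= p i) -> 0 <= l -> 0 <= PY p phi l y.
Proof.
move=> p_ge0 l_ge0; apply: sumr_ge0 => z _; apply: prodr_ge0 => i _.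
by apply/bern_ge0/mulr_ge0 => //; apply: p_ge0.
Qed.

(* PY as a product of factors that are differentiable in lam. *)
Lemma PY_derivable n (y : n.-tuple bool) (x : R) :
  derivable (fun l => PY p phi l y) x 1.
Proof.
elim: n y => [y|n IH y].
  have -> : (fun l => PY p phi l y) = cst 1 by apply/funext => l; rewrite PY0.
  exact: derivable_cst.
rewrite -(front_lastK y).
have -> : (fun l => PY p phi l (rcons_tuple (front y) (lastt y))) =
    (fun l => PY p phi l (front y)) *
    (fun l => cell_law (phi (front y)) (p n * l) (lastt y)).
  by apply/funext => l; rewrite PY_rcons.
by apply: derivableM; [exact: IH|apply: ex_derive; exact: is_derive_cell_law].
Qed.

Lemma derive1_PY_rcons n (y : n.-tuple bool) c (x : R) :
  derive1 (fun l => PY p phi l (rcons_tuple y c)) x =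
  derive1 (fun l => PY p phi l y) x * cell_law (phi y) (p n * x) c
  + PY p phi x y * cell_law_deriv (phi y) (p n) x c.
Proof.
have -> : (fun l => PY p phi l (rcons_tuple y c)) =
    (fun l => PY p phi l y) * (fun l => cell_law (phi y) (p n * l) c).
  by apply/funext => l; rewrite PY_rcons.
rewrite !derive1E deriveM; last 2 first.
- exact: PY_derivable.
- by apply: ex_derive; exact: is_derive_cell_law.
have cell_deriv := is_derive_cell_law (phi y) (p n) x c.
by rewrite derive_val /GRing.scale /= addrC [cell_law _ _ _ * _]mulrC.
Qed.

Lemma HYE n l :
  @HY R n p phi l = - \sum_(y : n.-tuple bool) PY p phi l y * log2 (PY p phi l y).
Proof.
rewrite /HY big_mkcond; congr (- _); apply: eq_bigr => y _.
by have [->|_] := eqVneq (PY p phi l y) 0; rewrite ?mul0r.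
Qed.

Lemma IYE n l : @IY R n p phi l =
  \sum_(y : n.-tuple bool) (derive1 (fun x => PY p phi x y) l) ^+ 2 / PY p phi l y.
Proof.
rewrite /IY big_mkcond; apply: eq_bigr => y _.
by have [->|_] := eqVneq (PY p phi l y) 0; rewrite ?invr0 ?mulr0.
Qed.

Definition not_phi_mass n l : R :=
  \sum_(y : n.-tuple bool) PY p phi l y * (~~ phi y)%:R.

Lemma HY_rcons n l : (forall i, (i <= n)%N -> 0 <= p i) -> 0 <= l ->
  @HY R n.+1 p phi l = @HY R n p phi l + Hdot (p n * l) * not_phi_mass n l.
Proof.
move=> p_ge0 l_ge0; rewrite !HYE sum_tuple_rcons.
have pl_ge0 : 0 <= p n * l by rewrite mulr_ge0 ?p_ge0.
have prefix_ge0 (y : n.-tuple bool) : 0 <= PY p phi l y.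
  by apply: PY_ge0 => // i /ltnW; apply: p_ge0.
under eq_bigr => y _ do under eq_bigr => c _ do rewrite PY_rcons.
rewrite (eq_bigr _ (fun (y : n.-tuple bool) _ => entropy_cell (phi y) (prefix_ge0 y) pl_ge0)).
by rewrite sumrB mulr_sumr opprB addrC.
Qed.

Lemma IY_rcons n l : 0 < p n * l ->
  l ^+ 2 * @IY R n.+1 p phi l =
  l ^+ 2 * @IY R n p phi l + Idot (p n * l) * not_phi_mass n l.
Proof.
move=> pl_gt0; rewrite !IYE sum_tuple_rcons.
under eq_bigr => y _ do under eq_bigr => c _ do rewrite derive1_PY_rcons PY_rcons.
rewrite mulr_sumr (eq_bigr _ (fun y _ => fisher_cell _ _ _ pl_gt0)).
by rewrite big_split /= -!mulr_sumr.
Qed.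

Lemma sum_Pz_Ystate n l (G : seq bool -> R) :
  \sum_(z : n.-tuple bool) Pz p l z * G (Ystate phi z) =
  \sum_(y : n.-tuple bool) PY p phi l y * G y.
Proof.
have Ysize (z : n.-tuple bool) : size (Ystate phi z) == n.
  by rewrite size_Ystate size_tuple.
rewrite /PY; under [RHS]eq_bigr => y _ do rewrite big_distrl big_mkcond /=.
rewrite exchange_big /=; apply: eq_bigr => z _.
by rewrite -big_mkcond (big_pred1 (Tuple (Ysize z))).
Qed.

Lemma PrNotPhi_rcons n l i : (i <= n)%N ->
  @PrNotPhi R n.+1 p phi l i = @PrNotPhi R n p phi l i.
Proof.
move=> i_le_n; rewrite /PrNotPhi sum_tuple_rcons; apply: eq_bigr => z _.
rewrite big_bool /= !Pz_rcons !Ystate_rcons -!cats1.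
by rewrite !takel_cat ?size_Ystate ?size_tuple // /bern; ring.
Qed.

Lemma PrNotPhi_last n l : @PrNotPhi R n.+1 p phi l n = not_phi_mass n l.
Proof.
rewrite /not_phi_mass -(sum_Pz_Ystate n l (fun y => (~~ phi y)%:R)).
rewrite /PrNotPhi sum_tuple_rcons; apply: eq_bigr => z _.
rewrite big_bool /= !Pz_rcons !Ystate_rcons -!cats1.
by rewrite !takel_cat ?take_oversize ?size_Ystate ?size_tuple // /bern; ring.
Qed.

Lemma PrNotPhi_stable i m l : (i <= m)%N ->
  @PrNotPhi R m p phi l i = @PrNotPhi R i p phi l i.
Proof.
move=> /subnKC <-; elim: (m - i)%N => [|k IH]; first by rewrite addn0.
by rewrite addnS PrNotPhi_rcons ?IH // leq_addr.
Qed.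

Lemma finite_cells n l : (forall i, (i < n)%N -> 0 < p i) -> 0 < l ->
  @HY R n p phi l = \sum_(i < n) Hdot (p i * l) * @PrNotPhi R n p phi l i /\
  l ^+ 2 * @IY R n p phi l = \sum_(i < n) Idot (p i * l) * @PrNotPhi R n p phi l i.
Proof.
elim: n => [|n IH] p_gt0 l_gt0.
  rewrite HYE IYE !sum_tuple0 PY0 !big_ord0.
  have -> : (fun x => PY p phi x [tuple]) = cst 1 by apply/funext => x; rewrite PY0.
  by rewrite derive1_cst /log2 ln1; split; ring.
have [IH_H IH_I] := IH (fun i i_lt_n => p_gt0 i (ltnW i_lt_n)) l_gt0.
have pl_gt0 : 0 < p n * l by rewrite mulr_gt0 ?p_gt0.
have p_ge0 i : (i <= n)%N -> 0 <= p i by move=> i_le_n; rewrite ltW ?p_gt0.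
rewrite (HY_rcons p_ge0 (ltW l_gt0)) (IY_rcons pl_gt0) IH_H IH_I.
rewrite !big_ord_recr /= PrNotPhi_last.
by split; congr (_ + _); apply: eq_bigr => i _; rewrite PrNotPhi_rcons // ltnW.
Qed.

Lemma finite_cells_prefix n l : (forall i, (i < n)%N -> 0 < p i) -> 0 < l ->
  @HY R n p phi l = \sum_(i < n) Hdot (p i * l) * @PrNotPhi R i p phi l i /\
  l ^+ 2 * @IY R n p phi l = \sum_(i < n) Idot (p i * l) * @PrNotPhi R i p phi l i.
Proof.
move=> p_gt0 l_gt0; have [-> ->] := finite_cells p_gt0 l_gt0.
by split; apply: eq_bigr => i _; rewrite PrNotPhi_stable // ltnW.
Qed.

End Occupancy.

Section CountableCells.
Variable R : realType.
Local Open Scope ereal_scope.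

Lemma ereal_sup_partial_sums (a s : nat -> R) : (forall i, (0 <= a i)%R) ->
  (forall m, s m = \sum_(i < m) a i)%R ->
  ereal_sup (range (fun m => (s m)%:E)) = \sum_(0 <= i <oo) (a i)%:E.
Proof.
move=> a_ge0 s_partial.
have -> : (fun m => (s m)%:E) = (fun m => \sum_(0 <= i < m) (a i)%:E).
  by apply/funext => m; rewrite s_partial -sumEFin big_mkord.
apply/esym/cvg_lim => //; apply/ereal_nondecreasing_cvgn.
by apply: ereal_nondecreasing_series => n _ _; rewrite lee_fin.
Qed.

Lemma ereal_sup_range_pZl (r : R) (f : nat -> R) : (0 < r)%R ->
  r%:E * ereal_sup (range (fun m => (f m)%:E)) =
  ereal_sup (range (fun m => (r * f m)%:E)).
Proof. by move=> r_gt0; rewrite -ereal_sup_pZl // image_comp. Qed.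

Lemma Hdot_ge0 (t : R) : (0 < t)%R -> (0 <= Hdot t)%R.
Proof.
move=> t_gt0; rewrite /Hdot; apply: divr_ge0; last by apply: ltW; apply: ln_gt0; rewrite ltr1n.
rewrite subr_ge0; apply: (@le_trans _ _ 0%R).
  apply: mulr_ge0_le0; first by rewrite subr_ge0 expR_le1 oppr_le0 ltW.
  by rewrite ln_le0 // lerBlDr lerDl expR_ge0.
by apply: mulr_ge0; [exact: ltW | exact: expR_ge0].
Qed.

Lemma Idot_ge0 (t : R) : (0 < t)%R -> (0 <= Idot t)%R.
Proof.
by move=> t_gt0; rewrite /Idot divr_ge0 ?sqr_ge0 // subr_ge0 ltW // expR_gt1.
Qed.

Lemma PrNotPhi_ge0 n (p : nat -> R) phi l i :
  (forall i, (0 <= p i)%R) -> (0 <= l)%R -> (0 <= @PrNotPhi R n p phi l i)%R.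
Proof.
move=> p_ge0 l_ge0; apply: sumr_ge0 => z _; rewrite mulr_ge0 ?ler0n //.
by apply: prodr_ge0 => j _; rewrite bern_ge0 ?mulr_ge0.
Qed.

Lemma countable_cells (p : nat -> R) phi lam :
  (forall i, (0 < p i)%R) -> (0 < lam)%R ->
  HYinf p phi lam = \sum_(0 <= i <oo) (Hdot (p i * lam) * @PrNotPhi R i p phi lam i)%:E
  /\ (lam ^+ 2)%:E * IYinf p phi lam =
     \sum_(0 <= i <oo) (Idot (p i * lam) * @PrNotPhi R i p phi lam i)%:E.
Proof.
move=> p_gt0 lam_gt0.
have pl_gt0 i : (0 < p i * lam)%R by rewrite mulr_gt0.
have Pr_ge0 i : (0 <= @PrNotPhi R i p phi lam i)%R.
  by apply: PrNotPhi_ge0 => [j|]; apply: ltW; [exact: p_gt0 | exact: lam_gt0].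
have partial_sums m := finite_cells_prefix phi (n := m) (fun i _ => p_gt0 i) lam_gt0.
rewrite /HYinf /IYinf ereal_sup_range_pZl ?exprn_gt0 //; split.
- apply: ereal_sup_partial_sums => [i|m]; last exact: (partial_sums m).1.
  by rewrite mulr_ge0 ?Hdot_ge0 ?pl_gt0 ?Pr_ge0.
- apply: ereal_sup_partial_sums => [i|m]; last exact: (partial_sums m).2.
  by rewrite mulr_ge0 ?Idot_ge0 ?pl_gt0 ?Pr_ge0.
Qed.

End CountableCells.

Theorem mainTheorem11 (R : realType) :
  (* finitely many cells c_0, ..., c_{n-1} *)
  (forall (n : nat) (p : nat -> R) (phi : seq bool -> bool) (lam : R),
     (forall i, (i < n)%N -> 0 < p i) -> \sum_(i < n) p i = 1 ->
     monotone_sketch phi -> 0 < lam ->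
     @HY R n p phi lam =
       \sum_(i < n) Hdot (p i * lam) * @PrNotPhi R n p phi lam i
     /\ lam ^+ 2 * @IY R n p phi lam =
       \sum_(i < n) Idot (p i * lam) * @PrNotPhi R n p phi lam i)
  /\
  (* countably many cells c_0, c_1, ... *)
  (forall (p : nat -> R) (phi : seq bool -> bool) (lam : R),
     (forall i, 0 < p i) -> series p @ \oo --> (1 : R) ->
     monotone_sketch phi -> 0 < lam ->
     HYinf p phi lam =
       (\sum_(0 <= i <oo) (Hdot (p i * lam) * @PrNotPhi R i p phi lam i)%:E)%E
     /\ ((lam ^+ 2)%:E * IYinf p phi lam =
       \sum_(0 <= i <oo) (Idot (p i * lam) * @PrNotPhi R i p phi lam i)%:E)%E).
Proof.
split.
- by move=> n p phi lam p_gt0 _ _ lam_gt0; exact: finite_cells.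
- by move=> p phi lam p_gt0 _ _ lam_gt0; exact: countable_cells.
Qed.
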